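(* Let $m\ge 2$ and let $W$ be a channel from $\{1,\dots,m\}$ to $\{1,2\}$. Then \[ \underline{C}_{10}(W)=C(W)\quad\text{and}\quad \overline{C}_{10}(W)=C\left(\begin{pmatrix}1&0\\ \underline{P}_W(1)&1-\underline{P}_W(1)\end{pmatrix}\right). \]
   Context: A channel from a finite set $\mathcal{A}$ to a finite set $\mathcal{B}$ is a row-stochastic matrix $(W_{a,b})$. For a probability distribution $\mu$ on the input set, $I(\mu,W)=\sum_x\mu_x D(W_{x,*}\|\mu W)$ (Kullback–Leibler divergence, base-2 logarithm), and $C(W)=\max_\mu I(\mu,W)$. Let $\mathcal{X}=\{1,\dots,m\}$, $\mathcal{Y}=\{1,\dots,n\}$ (here $n=2$). A deterministic channel is a 0-1 channel, identified with a map $D:\mathcal{X}\to\mathcal{Y}$; $\mathcal{D}$ is the set of all of them and $\mathrm{rank}(D)$ is the matrix rank. $\Lambda(W)=\{\lambda\text{ probability distribution on }\mathcal{D}: W=\sum_D\lambda_DD\}$. For $\lambda\in\Lambda(W)$, $C_{10}(\lambda)=\max_{\mu} I(\mu,V^\lambda)$, where $\mu$ ranges over probability distributions on the set $\mathcal{X}^{\mathcal{D}}$ of maps $u:\mathcal{D}\to\mathcal{X}$, and $V^\lambda$ is the channel from $\mathcal{X}^{\mathcal{D}}$ to $\mathcal{Y}$ with $V^\lambda_{u,y}=\sum_D\lambda_D D_{u(D),y}$. $\underline{C}_{10}(W)=\inf_{\lambda\in\Lambda(W)}C_{10}(\lambda)$, $\overline{C}_{10}(W)=\sup_{\lambda\in\Lambda(W)}C_{10}(\lambda)$.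 $\underline{P}_W(1)=\min_{\lambda\in\Lambda(W)}\lambda(\{D:\mathrm{rank}(D)=1\})$. *)

From HB Require Import structures.
From mathcomp Require Import all_boot all_order all_algebra.
From mathcomp Require Import all_classical all_reals all_analysis.
Set Implicit Arguments. Unset Strict Implicit. Unset Printing Implicit Defensive.
Import Order.TTheory GRing.Theory Num.Theory.
Local Open Scope classical_set_scope.
Local Open Scope ring_scope.

Section Channels.
Variable R : realType.

Definition is_channel (A B : finType) (W : A -> B -> R) : Prop :=
  (forall a b, 0 <= W a b) /\ (forall a, \sum_(b : B) W a b = 1).

Definition is_dist (A : finType) (mu : A -> R) : Prop :=
  (forall a, 0 <= mu a) /\ \sum_(a : A) mu a = 1.

Definition log2 (x : R) : R := ln x / ln 2.

Definition outdist (A B : finType) (mu : A -> R) (W : A -> B -> R) (b : B) : R :=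
  \sum_(a : A) mu a * W a b.

(* KL divergence (base 2), with the convention 0 log(0/q) = 0.  Only used
   inside I(mu,W) where p_b > 0 and mu_a > 0 force q_b > 0. *)
Definition KL (B : finType) (p q : B -> R) : R :=
  \sum_(b : B) (if p b == 0 then 0 else p b * log2 (p b / q b)).

Definition MI (A B : finType) (mu : A -> R) (W : A -> B -> R) : R :=
  \sum_(a : A) mu a * KL (W a) (outdist mu W).

(* capacity C(W) = max_mu I(mu,W) (the max is attained; stated as sup) *)
Definition capacity (A B : finType) (W : A -> B -> R) : R :=
  sup [set x | exists mu : A -> R, is_dist mu /\ x = MI mu W].

(* deterministic channels X -> Y identified with maps D : X -> Y *)
Definition detch (m n : nat) (D : {ffun 'I_m -> 'I_n}) (x : 'I_m) (y : 'I_n) : R :=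
  if D x == y then 1 else 0.

Definition detrank (m n : nat) (D : {ffun 'I_m -> 'I_n}) : nat :=
  \rank (\matrix_(i < m, j < n) detch D i j).

Definition Lambda (m n : nat) (W : 'I_m -> 'I_n -> R)
  (lam : {ffun 'I_m -> 'I_n} -> R) : Prop :=
  is_dist lam /\ forall x y, W x y = \sum_(D : {ffun 'I_m -> 'I_n}) lam D * detch D x y.

Definition Vlam (m n : nat) (lam : {ffun 'I_m -> 'I_n} -> R)
  (u : {ffun {ffun 'I_m -> 'I_n} -> 'I_m}) (y : 'I_n) : R :=
  \sum_(D : {ffun 'I_m -> 'I_n}) lam D * detch D (u D) y.

Definition C10 (m n : nat) (lam : {ffun 'I_m -> 'I_n} -> R) : R :=
  capacity (Vlam lam).

Definition lowC10 (m n : nat) (W : 'I_m -> 'I_n -> R) : R :=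
  inf [set x | exists lam, Lambda W lam /\ x = C10 lam].

Definition upC10 (m n : nat) (W : 'I_m -> 'I_n -> R) : R :=
  sup [set x | exists lam, Lambda W lam /\ x = C10 lam].

Definition lowP1 (m n : nat) (W : 'I_m -> 'I_n -> R) : R :=
  inf [set x | exists lam, Lambda W lam /\
        x = \sum_(D : {ffun 'I_m -> 'I_n} | detrank D == 1%N) lam D].

Definition zchan (p : R) : 'M[R]_(2, 2) :=
  \matrix_(i < 2, j < 2)
    (if i == 0 :> nat then (if j == 0 :> nat then 1 else 0)
     else (if j == 0 :> nat then p else 1 - p)).

End Channels.

From HB Require Import structures.
From mathcomp Require Import all_boot all_order all_algebra.
From mathcomp Require Import all_classical all_reals all_analysis.
From mathcomp Require Import ring lra.
Set Implicit Arguments. Unset Strict Implicit. Unset Printing Implicit Defensive.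
Import Order.TTheory GRing.Theory Num.Theory.
Local Open Scope classical_set_scope.
Local Open Scope ring_scope.

(* For binary output, C10(lam) depends on lam only through the masses l0, l1 of the
   two constant maps: every row of V^lam gives y0 a probability between l0 and 1 - l1,
   and the two codes "use an input on which D outputs y" attain both ends, so C10(lam)
   is the capacity of the binary channel [[1 - l1, l1]; [l0, 1 - l0]].  Constant codes
   make W a subchannel of every V^lam, while a product-measure decomposition with
   l1 = min_x W(y1|x) and l0 = min_x W(y0|x) makes that binary channel a subchannel
   of W; hence the infimum is C(W).  By convexity of capacity the binary channel is
   dominated by the Z-channel Z(l0 + l1), with equality when l0 l1 = 0.  Moving mass
   from the constant maps to two complementary non-constant maps (here m >= 2 is used)
   reaches that case without increasing l0 + l1, and C(Z(p)) is antitone and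
   right-continuous in p, so the supremum is C(Z(P_W(1))). *)

Lemma ler_sum_term (R : numDomainType) (I : finType) (F : I -> R) i :
  (forall j, 0 <= F j) -> F i <= \sum_j F j.
Proof. by move=> F0; rewrite (bigD1 i) //= lerDl sumr_ge0. Qed.

Definition bary (R : fieldType) (lo hi v : R) : R := (v - lo) / (hi - lo).

(* For [hi = lo] the junk value [x / 0 = 0] gives [bary lo hi v = 0], which still fits. *)
Lemma bary_spec (R : realFieldType) (lo hi v : R) : lo <= v <= hi ->
  0 <= bary lo hi v <= 1 /\ v = bary lo hi v * hi + (1 - bary lo hi v) * lo.
Proof.
move=> /andP [lo_v v_hi]; rewrite /bary.
have [d0|dn0] := eqVneq (hi - lo) 0.
  by rewrite d0 invr0 mulr0 lexx ler01; split => //; lra.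
have dp : 0 < hi - lo by rewrite lt_def dn0 subr_ge0 (le_trans lo_v v_hi).
split.
  apply/andP; split; first by apply: divr_ge0; [rewrite subr_ge0 | exact: ltW].
  by rewrite ler_pdivrMr // mul1r; lra.
have : (v - lo) / (hi - lo) * (hi - lo) = v - lo by rewrite divfK.
lra.
Qed.

Section RelativeEntropy.
Variable R : realType.

Definition relent (a b : R) : R := if a == 0 then 0 else a * ln (a / b).

Lemma ln_le_subr1 (x : R) : 0 < x -> ln x <= x - 1.
Proof.
by move=> x0; have := @le_ln1Dx R (x - 1); rewrite [1 + _]addrC subrK; apply; lra.
Qed.

Lemma subr1V_le_ln (x : R) : 0 < x -> 1 - x^-1 <= ln x.
Proof.
by move=> x0; have := ln_le_subr1 (x := x^-1); rewrite lnV ?posrE ?invr_gt0 //; lra.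
Qed.

Lemma relent0l (b : R) : relent 0 b = 0.
Proof. by rewrite /relent eqxx. Qed.

Lemma relentZ (c a b : R) : 0 <= c -> relent (c * a) (c * b) = c * relent a b.
Proof.
move=> c0; rewrite /relent; have [->|cn0] := eqVneq c 0; first by rewrite !mul0r eqxx.
rewrite mulf_eq0 (negbTE cn0) /=; case: eqP => _; first by rewrite mulr0.
by rewrite -mulrA invfM mulrACA divff // mul1r.
Qed.

Lemma relent_ge_tangent (a b t : R) : 0 <= a -> 0 <= b -> (0 < a -> 0 < b) -> 0 < t ->
  a * ln t + a - b * t <= relent a b.
Proof.
move=> a0 b0 ab t0; rewrite /relent; have [->|an0] := eqVneq a 0.
  by rewrite mul0r add0r sub0r oppr_le0 mulr_ge0 // ltW.
have ap : 0 < a by rewrite lt_def an0.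
have bp := ab ap.
have r0 : 0 < a / (b * t) by rewrite divr_gt0 // mulr_gt0.
have -> : a / b = t * (a / (b * t)) by field; rewrite !gt_eqF.
rewrite lnM ?posrE // mulrDr -addrA lerD2l.
have : a * (1 - (a / (b * t))^-1) <= a * ln (a / (b * t)).
  by rewrite ler_wpM2l ?subr1V_le_ln // ltW.
suff -> : a * (1 - (a / (b * t))^-1) = a - b * t by [].
by field; rewrite !gt_eqF.
Qed.

Lemma log_sum_ineq (I : finType) (a b : I -> R) :
  (forall i, 0 <= a i) -> (forall i, 0 <= b i) -> (forall i, 0 < a i -> 0 < b i) ->
  relent (\sum_i a i) (\sum_i b i) <= \sum_i relent (a i) (b i).
Proof.
move=> a0 b0 ab; have [A0|An0] := eqVneq (\sum_i a i) 0.
  rewrite A0 relent0l big1 // => i _.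
  by rewrite (psumr_eq0P (fun i _ => a0 i) A0) ?relent0l.
have [i /andP [_ ai]] := psumr_neq0P (fun i _ => a0 i) (elimN eqP An0).
have Ap : 0 < \sum_i a i by rewrite lt_def An0 sumr_ge0.
have Bp : 0 < \sum_i b i.
  by rewrite (lt_le_trans (ab i ai)) // ler_sum_term.
set A := \sum_i a i; set B := \sum_i b i.
apply: le_trans (ler_sum _ (fun i _ => relent_ge_tangent (a0 i) (b0 i) (ab i) (divr_gt0 Ap Bp))).
rewrite !big_split /= sumrN -!mulr_suml -/A -/B /relent gt_eqF //.
by rewrite mulrCA divff ?mulr1 ?addrK // gt_eqF.
Qed.

Lemma relent_convex (I : finType) (c w q : I -> R) :
  (forall i, 0 <= c i) -> (forall i, 0 <= w i) -> (forall i, 0 <= q i) ->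
  (forall i, 0 < c i -> 0 < w i -> 0 < q i) ->
  relent (\sum_i c i * w i) (\sum_i c i * q i) <= \sum_i c i * relent (w i) (q i).
Proof.
move=> c0 w0 q0 wq; under [leRHS]eq_bigr => i _ do rewrite -relentZ //.
apply: log_sum_ineq => i; rewrite ?mulr_ge0 //.
by rewrite !mulr_ge0_gt0 // => /andP [ci wi]; rewrite ci wq.
Qed.

Lemma relent_convex2 (t w1 w2 q1 q2 : R) : 0 <= t <= 1 ->
  0 <= w1 -> 0 <= w2 -> 0 <= q1 -> 0 <= q2 -> (0 < w1 -> 0 < q1) -> (0 < w2 -> 0 < q2) ->
  relent (t * w1 + (1 - t) * w2) (t * q1 + (1 - t) * q2) <=
  t * relent w1 q1 + (1 - t) * relent w2 q2.
Proof.
move=> /andP [t0 t1] w10 w20 q10 q20 wq1 wq2.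
have := relent_convex (c := fun i : bool => if i then t else 1 - t)
  (w := fun i => if i then w1 else w2) (q := fun i => if i then q1 else q2).
by rewrite !big_bool; apply=> -[] //=; rewrite subr_ge0.
Qed.

Lemma relent1 (c : R) : 0 < c -> relent 1 c = - ln c.
Proof. by move=> c0; rewrite /relent oner_eq0 mul1r div1r lnV ?posrE. Qed.

Lemma xlnx_ge (q : R) : 0 < q -> - 2 * Num.sqrt q <= q * ln q.
Proof.
move=> qp; have sp : 0 < Num.sqrt q by rewrite sqrtr_gt0.
have qE : q = Num.sqrt q * Num.sqrt q by rewrite -expr2 sqr_sqrtr // ltW.
have h : Num.sqrt q - 1 <= Num.sqrt q * ln (Num.sqrt q).
  by have := ler_wpM2l (ltW sp) (subr1V_le_ln sp); rewrite mulrBr mulr1 mulfV ?gt_eqF.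
rewrite [in X in _ <= X]qE lnM ?posrE //; nra.
Qed.

Lemma relent1_sub_le (a c : R) : 0 <= a -> a <= c ->
  a * relent 1 a - a * relent 1 c <= c - a.
Proof.
move=> a0 ac; have [a_0|an0] := eqVneq a 0.
  by move: ac; rewrite a_0 !mul0r subrr subr0.
have ap : 0 < a by rewrite lt_def an0.
have cp := lt_le_trans ap ac.
have := ler_wpM2l (ltW ap) (ln_le_subr1 (divr_gt0 cp ap)).
have -> : a * (c / a - 1) = c - a by field; rewrite gt_eqF.
by rewrite ln_div ?posrE // !relent1 //; lra.
Qed.

Lemma relent_ge_neg_sqrt (a q c : R) : 0 <= a -> a <= 1 -> 0 <= q -> q <= c -> c <= 1 ->
  - 2 * Num.sqrt q <= a * relent q c.
Proof.
move=> a0 a1 q0 qc c1; have [->|qn0] := eqVneq q 0.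
  by rewrite relent0l mulr0 sqrtr0; lra.
have qp : 0 < q by rewrite lt_def qn0.
have : - 2 * Num.sqrt q <= relent q c.
  rewrite /relent (negbTE qn0) ln_div ?posrE ?(lt_le_trans qp qc) // mulrBr.
  by have := xlnx_ge qp; have := mulr_ge0_le0 q0 (ln_le0 c1); lra.
by have := sqrtr_ge0 q; nra.
Qed.

Lemma relent1_scale_ge (a q : R) : 0 <= a -> 0 <= q -> q <= 1 ->
  a * relent 1 a - q <= a * relent (1 - q) (a * (1 - q)).
Proof.
move=> a0 q0 q1; have ar : a * relent 1 a <= 1.
  have [->|an0] := eqVneq a 0; first by rewrite mul0r ler01.
  have ap : 0 < a by rewrite lt_def an0.
  have := ler_wpM2l (ltW ap) (subr1V_le_ln ap).
  by rewrite relent1 // mulrBr mulr1 mulfV ?gt_eqF //; lra.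
have q1' : 0 <= 1 - q by rewrite subr_ge0.
have := relentZ 1 a q1'; rewrite mulr1 [(1 - q) * a]mulrC => ->.
have : 0 <= q * (1 - a * relent 1 a) by rewrite mulr_ge0 // subr_ge0.
lra.
Qed.

End RelativeEntropy.

Section MutualInformation.
Variable R : realType.
Implicit Types A B : finType.

Lemma channelP A B (W : A -> B -> R) : is_channel W <-> forall a, is_dist (W a).
Proof.
split=> [[W0 W1] a | hW]; first by split=> [b|]; [exact: W0 | exact: W1].
by split=> [a b | a]; case: (hW a).
Qed.

Definition MI_nat A B (mu : A -> R) (W : A -> B -> R) : R :=
  \sum_a \sum_b mu a * relent (W a b) (outdist mu W b).

Lemma MI_natE A B (mu : A -> R) (W : A -> B -> R) : MI mu W = MI_nat mu W / ln 2.
Proof.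
rewrite /MI /MI_nat mulr_suml; apply: eq_bigr => a _.
rewrite /KL mulr_sumr mulr_suml; apply: eq_bigr => b _.
by rewrite /relent /log2; case: eqP => _; rewrite ?mulr0 ?mul0r // !mulrA.
Qed.

Lemma ln2_gt0 : 0 < ln (2 : R).
Proof. by rewrite ln_gt0 // ltr1n. Qed.

Section OutputDistribution.
Variables (A B : finType) (mu : A -> R) (W : A -> B -> R).
Hypotheses (hmu : is_dist mu) (hW : is_channel W).
Let mu_ge0 : forall a, 0 <= mu a := proj1 hmu.
Let W_ge0 : forall a b, 0 <= W a b := proj1 hW.

Lemma outdist_ge a b : mu a * W a b <= outdist mu W b.
Proof. by rewrite ler_sum_term // => a'; rewrite mulr_ge0 ?mu_ge0 ?W_ge0. Qed.

Lemma outdist_ge0 b : 0 <= outdist mu W b.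
Proof. by rewrite sumr_ge0 // => a _; rewrite mulr_ge0 ?mu_ge0 ?W_ge0. Qed.

Lemma outdist_dist : is_dist (outdist mu W).
Proof.
split; first exact: outdist_ge0.
rewrite exchange_big /= -(proj2 hmu); apply: eq_bigr => a _.
by rewrite -mulr_sumr (proj2 hW) mulr1.
Qed.

Lemma MI_nat_le_card : MI_nat mu W <= #|A|%:R.
Proof.
suff term_le a b : mu a * relent (W a b) (outdist mu W b) <= W a b.
  apply: le_trans (ler_sum _ (fun a _ => ler_sum _ (fun b _ => term_le a b))) _.
  by rewrite (eq_bigr (fun _ => 1)) ?sumr_const // => a _; rewrite (proj2 hW).
rewrite /relent; have [->|wn0] := eqVneq (W a b) 0; first by rewrite mulr0.
have wp : 0 < W a b by rewrite lt_def wn0 W_ge0.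
have [->|mn0] := eqVneq (mu a) 0; first by rewrite mul0r.
have mp : 0 < mu a by rewrite lt_def mn0 mu_ge0.
have qp : 0 < outdist mu W b by rewrite (lt_le_trans _ (outdist_ge a b)) ?mulr_gt0.
set q := outdist mu W b in qp *.
apply: (@le_trans _ _ (mu a * (W a b * (W a b / q)))).
  by rewrite ler_wpM2l ?ler_wpM2l ?(ltW mp) ?(ltW wp) // ltW // ln_sublinear ?divr_gt0.
rewrite mulrCA -[leRHS]mulr1 ler_wpM2l ?(ltW wp) //.
by rewrite mulrA ler_pdivrMr // mul1r outdist_ge.
Qed.

End OutputDistribution.

Definition point_dist A (a0 : A) : A -> R := fun a => (a == a0)%:R.

Lemma point_dist_dist A (a0 : A) : is_dist (point_dist a0).
Proof.
split=> [a|]; first by rewrite ler0n.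
by rewrite /point_dist (bigD1 a0) //= eqxx big1 ?addr0 // => a /negbTE ->.
Qed.

Lemma sum_point_dist A (a0 : A) (F : A -> R) : \sum_a point_dist a0 a * F a = F a0.
Proof.
rewrite (bigD1 a0) //= /point_dist eqxx mul1r big1 ?addr0 // => a /negbTE ->.
by rewrite mul0r.
Qed.

Lemma outdist_point A B (a0 : A) (W : A -> B -> R) b : outdist (point_dist a0) W b = W a0 b.
Proof. exact: sum_point_dist. Qed.

Lemma mix_dist A (mu1 mu2 : A -> R) (t : R) : 0 <= t <= 1 ->
  is_dist mu1 -> is_dist mu2 -> is_dist (fun a => t * mu1 a + (1 - t) * mu2 a).
Proof.
move=> /andP [t0 t1] [mu1_ge0 mu1_sum] [mu2_ge0 mu2_sum]; split=> [a|].
  by rewrite addr_ge0 // mulr_ge0 // subr_ge0.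
by rewrite big_split /= -!mulr_sumr mu1_sum mu2_sum !mulr1 subrKC.
Qed.

Lemma outdist_mix A B (mu1 mu2 : A -> R) (W : A -> B -> R) (t : R) b :
  outdist (fun a => t * mu1 a + (1 - t) * mu2 a) W b =
  t * outdist mu1 W b + (1 - t) * outdist mu2 W b.
Proof.
rewrite /outdist !mulr_sumr -big_split; apply: eq_bigr => a _.
by rewrite mulrDl !mulrA.
Qed.

Lemma MI_le_capacity A B (mu : A -> R) (W : A -> B -> R) :
  is_channel W -> is_dist mu -> MI mu W <= capacity W.
Proof.
move=> hW hmu; apply: ub_le_sup; last by exists mu.
exists (#|A|%:R / ln 2) => _ [nu [hnu ->]].
by rewrite MI_natE ler_pM2r ?invr_gt0 ?ln2_gt0 // MI_nat_le_card.
Qed.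

Lemma capacity_le A B (a0 : A) (W : A -> B -> R) c :
  (forall mu, is_dist mu -> MI mu W <= c) -> capacity W <= c.
Proof.
move=> hc; apply: ge_sup => [|_ [mu [hmu ->]]]; last exact: hc.
by exists (MI (point_dist a0) W), (point_dist a0); split => //; apply: point_dist_dist.
Qed.

Lemma outdist_comp A' A B (mu : A' -> R) (T : A' -> A -> R) (W : A -> B -> R) b :
  outdist (outdist mu T) W b = outdist mu (fun u => outdist (T u) W) b.
Proof.
rewrite /outdist; under eq_bigr => x _ do rewrite mulr_suml.
rewrite exchange_big; apply: eq_bigr => u _; rewrite mulr_sumr.
by apply: eq_bigr => x _; rewrite mulrA.
Qed.

Section Preprocessing.
Variables (A' A B : finType) (T : A' -> A -> R) (W : A -> B -> R) (V : A' -> B -> R).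
Hypotheses (hT : is_channel T) (hW : is_channel W).
Hypothesis hV : forall u b, V u b = outdist (T u) W b.

Lemma preproc_channel : is_channel V.
Proof.
apply/channelP => u; rewrite (funext (hV u)).
exact: outdist_dist (proj1 (channelP _) hT u) hW.
Qed.

Lemma MI_nat_preproc mu : is_dist mu -> MI_nat mu V <= MI_nat (outdist mu T) W.
Proof.
move=> hmu; have [mu_ge0 _] := hmu; have [T_ge0 T_sum] := hT; have [W_ge0 _] := hW.
have hTu u : is_dist (T u) := proj1 (channelP T) hT u.
have qE b : outdist (outdist mu T) W b = outdist mu V b.
  by rewrite outdist_comp; apply: eq_bigr => u _; rewrite hV.
apply: (@le_trans _ _ (\sum_u \sum_b \sum_x mu u * T u x * relent (W x b) (outdist mu V b))).
  apply: ler_sum => u _; apply: ler_sum => b _; set q := outdist mu V b.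
  rewrite -relentZ //.
  have -> : mu u * V u b = \sum_x (mu u * T u x) * W x b.
    by rewrite hV /outdist mulr_sumr; apply: eq_bigr => x _; rewrite mulrA.
  have -> : mu u * q = \sum_x (mu u * T u x) * q by rewrite -mulr_suml -mulr_sumr T_sum mulr1.
  apply: relent_convex => x; rewrite ?mulr_ge0 ?(outdist_ge0 hmu preproc_channel b) //.
  move=> + Wp; rewrite mulr_ge0_gt0 // => /andP [mup Tp].
  apply: lt_le_trans (outdist_ge hmu preproc_channel u b).
  by rewrite mulr_gt0 // hV (lt_le_trans _ (outdist_ge (hTu u) hW x b)) ?mulr_gt0.
rewrite /MI_nat; under eq_bigr => u _ do rewrite exchange_big.
rewrite exchange_big; apply: ler_sum => x _; rewrite exchange_big; apply: ler_sum => b _.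
by rewrite qE [outdist mu T x]/outdist mulr_suml.
Qed.

Lemma capacity_preproc (u0 : A') : capacity V <= capacity W.
Proof.
apply: (capacity_le u0) => mu hmu.
apply: le_trans (MI_le_capacity hW (outdist_dist hmu hT)).
by rewrite !MI_natE ler_pM2r ?invr_gt0 ?ln2_gt0 // MI_nat_preproc.
Qed.

End Preprocessing.

Lemma capacity_subchannel A A' B (a0 : A) (f : A -> A') (W : A -> B -> R) (V : A' -> B -> R) :
  is_channel V -> (forall a b, W a b = V (f a) b) -> capacity W <= capacity V.
Proof.
move=> hV hW; apply: (capacity_preproc (T := fun a => point_dist (f a))) => //.
  by apply/channelP => a; apply: point_dist_dist.
by move=> a b; rewrite hW outdist_point.
Qed.

Lemma MI_nat_convex A B (mu : A -> R) (W1 W2 : A -> B -> R) (t : R) :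
  is_channel W1 -> is_channel W2 -> 0 <= t <= 1 -> is_dist mu ->
  MI_nat mu (fun a b => t * W1 a b + (1 - t) * W2 a b) <=
  t * MI_nat mu W1 + (1 - t) * MI_nat mu W2.
Proof.
move=> hW1 hW2 /andP [t0 t1] hmu; have [mu_ge0 _] := hmu.
have q_mix b : outdist mu (fun a b => t * W1 a b + (1 - t) * W2 a b) b =
    t * outdist mu W1 b + (1 - t) * outdist mu W2 b.
  rewrite /outdist !mulr_sumr -big_split; apply: eq_bigr => a _.
  by rewrite mulrDr (mulrCA t) (mulrCA (1 - t)).
rewrite /MI_nat !mulr_sumr -big_split; apply: ler_sum => a _.
rewrite !mulr_sumr -big_split; apply: ler_sum => b _ /=.
rewrite q_mix (mulrCA t) (mulrCA (1 - t)) -mulrDr.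
have [->|mun0] := eqVneq (mu a) 0; first by rewrite !mul0r.
rewrite ler_wpM2l //.
have mup : 0 < mu a by rewrite lt_def mun0 mu_ge0.
apply: relent_convex2; rewrite ?t0 ?t1 ?(proj1 hW1) ?(proj1 hW2) //.
- exact: (outdist_ge0 hmu hW1 b).
- exact: (outdist_ge0 hmu hW2 b).
- by move=> wp; rewrite (lt_le_trans _ (outdist_ge hmu hW1 a b)) ?mulr_gt0.
- by move=> wp; rewrite (lt_le_trans _ (outdist_ge hmu hW2 a b)) ?mulr_gt0.
Qed.

Lemma capacity_convex A B (a0 : A) (W1 W2 : A -> B -> R) (t : R) :
  is_channel W1 -> is_channel W2 -> 0 <= t <= 1 ->
  capacity (fun a b => t * W1 a b + (1 - t) * W2 a b) <=
  t * capacity W1 + (1 - t) * capacity W2.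
Proof.
move=> hW1 hW2 ht; have /andP [t0 t1] := ht; apply: (capacity_le a0) => mu hmu.
apply: (@le_trans _ _ (t * MI mu W1 + (1 - t) * MI mu W2)).
  by rewrite !MI_natE !mulrA -mulrDl ler_pM2r ?invr_gt0 ?ln2_gt0 // MI_nat_convex.
by rewrite lerD // ler_wpM2l ?subr_ge0 // MI_le_capacity.
Qed.

Lemma capacity_perm_in A B (a0 : A) (W : A -> B -> R) (s : A -> A) :
  is_channel W -> bijective s -> capacity (fun a => W (s a)) = capacity W.
Proof.
move=> hW [g sK gK]; have hWs : is_channel (fun a => W (s a)).
  by apply/channelP => a; apply: (proj1 (channelP W) hW).
apply: le_anti; rewrite (capacity_subchannel a0 (f := s)) //.
by apply: (capacity_subchannel a0 (f := g)) => // a b; rewrite gK.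
Qed.

Lemma capacity_perm_out A B (W : A -> B -> R) (s : B -> B) :
  injective s -> capacity (fun a b => W a (s b)) = capacity W.
Proof.
move=> s_inj; suff MI_perm mu : MI mu (fun a b => W a (s b)) = MI mu W.
  by rewrite /capacity; under eq_fun => x do under eq_exists => mu do rewrite MI_perm.
rewrite !MI_natE /MI_nat; congr (_ / _); apply: eq_bigr => a _.
by rewrite [RHS](reindex_inj s_inj).
Qed.

End MutualInformation.

Arguments point_dist {R A}.
Arguments point_dist_dist {R A}.

Definition y0 : 'I_2 := ord0.
Definition y1 : 'I_2 := ord_max.

Lemma I2_cases (b : 'I_2) : b = y0 \/ b = y1.
Proof. by case: b => [[|[|]]] //= h; [left | right]; apply: val_inj. Qed.

Lemma y0_neq_y1 : (y0 == y1) = false. Proof. by []. Qed.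
Lemma y1_neq_y0 : (y1 == y0) = false. Proof. by []. Qed.

Definition other (i : 'I_2) : 'I_2 := if i == y0 then y1 else y0.

Lemma other_y0 : other y0 = y1. Proof. by []. Qed.
Lemma other_y1 : other y1 = y0. Proof. by []. Qed.

Lemma otherK : involutive other.
Proof. by move=> i; case: (I2_cases i) => ->. Qed.

Section BinaryChannels.
Variable R : realType.

Lemma sum_I2 (F : 'I_2 -> R) : \sum_i F i = F y0 + F y1.
Proof. by rewrite big_ord_recl big_ord1; congr (_ + F _); apply: val_inj. Qed.

Definition row2 (r : R) (j : 'I_2) : R := if j == y0 then r else 1 - r.

(* [chan2 al be] is the binary channel [[al, 1 - al]; [be, 1 - be]]. *)
Definition chan2 (al be : R) (i : 'I_2) : 'I_2 -> R := row2 (if i == y0 then al else be).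

Lemma row2_y0 r : row2 r y0 = r. Proof. by []. Qed.
Lemma row2_y1 r : row2 r y1 = 1 - r. Proof. by []. Qed.
Lemma chan2_y0 al be : chan2 al be y0 = row2 al. Proof. by []. Qed.
Lemma chan2_y1 al be : chan2 al be y1 = row2 be. Proof. by []. Qed.
Definition chan2E := (chan2_y0, chan2_y1, row2_y0, row2_y1).

Lemma row2_dist r : 0 <= r <= 1 -> is_dist (row2 r).
Proof.
move=> /andP [r0 r1]; split=> [j|]; last by rewrite sum_I2 !chan2E subrKC.
by rewrite /row2; case: ifP; rewrite ?subr_ge0.
Qed.

Lemma chan2_channel al be : 0 <= al <= 1 -> 0 <= be <= 1 -> is_channel (chan2 al be).
Proof.
by move=> hal hbe; apply/channelP => i; case: (I2_cases i) => ->; apply: row2_dist.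
Qed.

Lemma channel2_rowE (A : finType) (W : A -> 'I_2 -> R) x j :
  is_channel W -> W x j = row2 (W x y0) j.
Proof.
case=> _ W1; case: (I2_cases j) => -> //; rewrite row2_y1 -(W1 x) sum_I2.
by rewrite [_ + W x y1]addrC addrK.
Qed.

Lemma row2_mix (t r1 r2 : R) j :
  t * row2 r1 j + (1 - t) * row2 r2 j = row2 (t * r1 + (1 - t) * r2) j.
Proof. by case: (I2_cases j) => ->; rewrite !chan2E //; ring. Qed.

Lemma chan2_mix (t al be al' be' : R) i j :
  t * chan2 al be i j + (1 - t) * chan2 al' be' i j =
  chan2 (t * al + (1 - t) * al') (t * be + (1 - t) * be') i j.
Proof. by case: (I2_cases i) => ->; rewrite !chan2E row2_mix. Qed.

Lemma capacity_chan2_sym al be : 0 <= al <= 1 -> 0 <= be <= 1 ->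
  capacity (chan2 (1 - be) (1 - al)) = capacity (chan2 al be).
Proof.
move=> hal hbe.
have -> : chan2 (1 - be) (1 - al) = fun i j => chan2 al be (other i) (other j).
  apply: funext => i; apply: funext => j.
  by case: (I2_cases i) => ->; case: (I2_cases j) => ->; rewrite /= !chan2E ?opprB ?subrKC.
rewrite (capacity_perm_out (fun i => chan2 al be (other i)) (inv_inj otherK)).
exact: (capacity_perm_in y0 (chan2_channel hal hbe) (inv_bij otherK)).
Qed.

Lemma capacity_rows_between (A A' : finType) (u0 : A') (W : A -> 'I_2 -> R)
    (V : A' -> 'I_2 -> R) x1 x2 :
  is_channel W -> is_channel V -> (forall u, W x2 y0 <= V u y0 <= W x1 y0) ->
  capacity V <= capacity W.
Proof.
(* Each row of V is a convex combination of the rows x1 and x2 of W. *)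
move=> hW hV hb; pose t u := bary (W x2 y0) (W x1 y0) (V u y0).
pose T u x := t u * point_dist x1 x + (1 - t u) * point_dist x2 x.
apply: (capacity_preproc (T := T) _ hW _ u0).
  apply/channelP => u.
  exact: mix_dist (proj1 (bary_spec (hb u))) (point_dist_dist x1) (point_dist_dist x2).
move=> u b; rewrite outdist_mix !outdist_point.
rewrite (channel2_rowE u b hV) (channel2_rowE x1 b hW) (channel2_rowE x2 b hW).
by rewrite row2_mix -(proj2 (bary_spec (hb u))).
Qed.

End BinaryChannels.

Notation zch p := (chan2 1 p).

Section ZChannel.
Variable R : realType.

Lemma zchanE (p : R) : (fun i j => zchan p i j) = zch p.
Proof.
apply: funext => i; apply: funext => j; rewrite /zchan mxE.
by case: (I2_cases i) => ->; case: (I2_cases j) => ->; rewrite !chan2E ?subrr.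
Qed.

Lemma capacity_zch_antitone (p q : R) : 0 <= p <= q -> q <= 1 ->
  capacity (zch q) <= capacity (zch p).
Proof.
move=> /andP [p0 pq] q1; have p1 := le_trans pq q1.
apply: (capacity_rows_between y0 (x1 := y0) (x2 := y1)).
- by apply: chan2_channel; rewrite ?ler01 ?lexx ?p0.
- by apply: chan2_channel; rewrite ?ler01 ?lexx ?(le_trans p0 pq).
- by move=> u; case: (I2_cases u) => ->; rewrite !chan2E ?p1 ?pq ?q1 ?lexx.
Qed.

Lemma capacity_chan2_le_zch (al be : R) : 0 <= be <= al -> al <= 1 ->
  capacity (chan2 al be) <= capacity (zch (1 - al + be)).
Proof.
move=> /andP [be0 beal] al1; move sE: (1 - al + be) => s.
have s0 : 0 <= s by lra.
have s1 : s <= 1 by lra.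
have hbe : 0 <= be <= s by rewrite be0 /=; lra.
have [th01 thE] := bary_spec hbe; set th := bary 0 s be in th01 thE *.
have -> : chan2 al be = fun i j => th * zch s i j + (1 - th) * chan2 (1 - s) 0 i j.
  apply: funext => i; apply: funext => j; rewrite chan2_mix.
  by congr (chan2 _ _ i j); lra.
have ch1 : is_channel (zch s) by apply: chan2_channel; rewrite ?ler01 ?lexx ?s0.
have ch2 : is_channel (chan2 (1 - s) 0) by apply: chan2_channel; rewrite ?lexx ?ler01 //; lra.
apply: le_trans (capacity_convex y0 ch1 ch2 th01) _.
have -> : capacity (chan2 (1 - s) 0) = capacity (zch s).
  by rewrite -(capacity_chan2_sym (al := 1)) ?subrr ?ler01 ?lexx ?s0.
by rewrite -mulrDl subrKC mul1r.
Qed.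

Lemma capacity_zch_mix (p q : R) : 0 <= p <= q -> 0 < q -> q <= 1 ->
  capacity (zch p) <= p / q * capacity (zch q) + (1 - p / q) * capacity (zch 0).
Proof.
move=> /andP [p0 pq] q0 q1.
have th01 : 0 <= p / q <= 1 by rewrite divr_ge0 ?ler_pdivrMr ?mul1r // ltW.
have -> : zch p = fun i j => p / q * zch q i j + (1 - p / q) * zch 0 i j.
  apply: funext => i; apply: funext => j.
  by rewrite chan2_mix !mulr1 subrKC mulr0 addr0 divfK // gt_eqF.
by apply: (capacity_convex y0) => //; apply: chan2_channel; rewrite ?ler01 ?lexx ?q1 // ltW.
Qed.

Lemma MI_nat_zch0_le (mu : 'I_2 -> R) (q : R) : is_dist mu -> 0 <= q <= 1 ->
  MI_nat mu (zch 0) <= MI_nat mu (zch q) + 2 * q + 2 * Num.sqrt q.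
Proof.
move=> [mu0 mu1] /andP [q0 q1]; rewrite sum_I2 in mu1.
rewrite /MI_nat /outdist !sum_I2 !chan2E.
rewrite !(subrr, subr0, mulr0, mulr1, addr0, add0r, relent0l).
have a1_le1 : mu y1 <= 1 by have := mu0 y0; lra.
have a1q : mu y1 * q <= q := ler_piMl q0 a1_le1.
have c_ge : mu y0 <= mu y0 + mu y1 * q by rewrite lerDl mulr_ge0.
have c_geq : q <= mu y0 + mu y1 * q.
  have : q = mu y0 * q + mu y1 * q by rewrite -mulrDl mu1 mul1r.
  by have := ler_wpM2l (mu0 y0) q1; lra.
have c_le1 : mu y0 + mu y1 * q <= 1.
  by have := ler_wpM2l (mu0 y1) q1; rewrite mulr1; lra.
have := relent1_sub_le (mu0 y0) c_ge.
have := relent_ge_neg_sqrt (mu0 y1) a1_le1 q0 c_geq c_le1.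
have := relent1_scale_ge (mu0 y1) q0 q1.
lra.
Qed.

Lemma capacity_zch0_le (q : R) : 0 <= q <= 1 ->
  capacity (zch 0) <= capacity (zch q) + (2 * q + 2 * Num.sqrt q) / ln 2.
Proof.
move=> q01; apply: (capacity_le y0) => mu hmu.
apply: (@le_trans _ _ (MI mu (zch q) + (2 * q + 2 * Num.sqrt q) / ln 2)).
  by rewrite !MI_natE -mulrDl ler_pM2r ?invr_gt0 ?ln2_gt0 // addrA MI_nat_zch0_le.
by rewrite lerD2r MI_le_capacity //; apply: chan2_channel; rewrite ?ler01 ?lexx.
Qed.

Lemma capacity_zch_modulus (p q : R) : 0 <= p <= q -> q <= 1 ->
  capacity (zch p) <= capacity (zch q) + (2 * (q - p) + 2 * Num.sqrt (q - p)) / ln 2.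
Proof.
(* Z(p) mixes Z(q) with the noiseless Z(0), and C(Z(0)) - C(Z(q)) = O(sqrt q). *)
move=> /andP [p0 pq] q1.
have [q_0|qn0] := eqVneq q 0.
  have p_0 : p = 0 by apply: le_anti; rewrite p0 -q_0 pq.
  by rewrite p_0 q_0 !(subrr, sqrtr0, mulr0, addr0, mul0r).
have qp : 0 < q by rewrite lt_def qn0 (le_trans p0 pq).
have sp : 0 < Num.sqrt q by rewrite sqrtr_gt0.
apply: le_trans (capacity_zch_mix _ qp q1) _; first by rewrite p0 pq.
have thq : p / q * q = p by rewrite divfK ?gt_eqF.
have th1 : 0 <= 1 - p / q by rewrite subr_ge0 ler_pdivrMr ?mul1r.
have sqrt_le : (1 - p / q) * Num.sqrt q <= Num.sqrt (q - p).
  have rs : Num.sqrt (q - p) <= Num.sqrt q by rewrite ler_sqrt ?(ltW qp) //; lra.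
  have sE : Num.sqrt q * Num.sqrt q = q by rewrite -expr2 sqr_sqrtr ?ltW.
  have rE : Num.sqrt (q - p) * Num.sqrt (q - p) = q - p by rewrite -expr2 sqr_sqrtr ?subr_ge0.
  have xq : (1 - p / q) * q = q - p by rewrite mulrBl mul1r thq.
  have := sqrtr_ge0 (q - p); nra.
have q01 : 0 <= q <= 1 by rewrite (ltW qp) q1.
have := ler_wpM2l th1 (capacity_zch0_le q01).
have : (1 - p / q) * ((2 * q + 2 * Num.sqrt q) / ln 2) <=
    (2 * (q - p) + 2 * Num.sqrt (q - p)) / ln 2.
  rewrite mulrA ler_pM2r ?invr_gt0 ?ln2_gt0 //; lra.
lra.
Qed.

Lemma capacity_zch_rcont (P x : R) : 0 <= P -> x < capacity (zch P) ->
  exists2 d, 0 < d & forall q, P <= q <= 1 -> q < P + d -> x < capacity (zch q).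
Proof.
move=> P0 hx; pose c := (capacity (zch P) - x) * ln 2 / 4.
have cp : 0 < c by rewrite /c !divr_gt0 ?mulr_gt0 ?ln2_gt0 // subr_gt0.
have c4 : c * 4 = (capacity (zch P) - x) * ln 2 by rewrite /c divfK.
exists (c * c) => [|q /andP [Pq q1] qd]; first by rewrite mulr_gt0.
have PqP : 0 <= P <= q by rewrite P0 Pq.
have := capacity_zch_modulus PqP q1.
have r0 := sqrtr_ge0 (q - P).
have rE : Num.sqrt (q - P) * Num.sqrt (q - P) = q - P by rewrite -expr2 sqr_sqrtr ?subr_ge0.
have r_lt : Num.sqrt (q - P) < c.
  rewrite -[c]gtr0_norm // -sqrtr_sqr ltr_sqrt ?exprn_gt0 //; lra.
have r_le1 : Num.sqrt (q - P) <= 1 by nra.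
have : (2 * (q - P) + 2 * Num.sqrt (q - P)) / ln 2 < capacity (zch P) - x.
  by rewrite ltr_pdivrMr ?ln2_gt0 //; nra.
lra.
Qed.

End ZChannel.

Section ProductDistribution.
Variables (R : realType) (I J : finType) (F : I -> J -> R).
Hypothesis hF : is_channel F.

Definition prod_dist (D : {ffun I -> J}) : R := \prod_i F i (D i).

Lemma prod_dist_dist : is_dist prod_dist.
Proof.
have [F0 F1] := hF; split=> [D|]; first exact: prodr_ge0.
by rewrite /prod_dist -bigA_distr_bigA big1 // => i _; rewrite F1.
Qed.

Lemma prod_dist_marginal i j : \sum_D prod_dist D * (D i == j)%:R = F i j.
Proof.
(* Put the indicator into the i-th factor, then expand the product of sums. *)
have [_ F1] := hF; pose G k l := if k == i then F k l * (l == j)%:R else F k l.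
have -> : \sum_D prod_dist D * (D i == j)%:R = \sum_(D : {ffun I -> J}) \prod_k G k (D k).
  apply: eq_bigr => D _; rewrite /prod_dist (bigD1 i) //= [in RHS](bigD1 i) //= /G eqxx.
  rewrite mulrAC; congr (_ * _); apply: eq_bigr => k /negbTE ki.
  by rewrite ki.
have rest : \prod_(k | k != i) \sum_l G k l = 1.
  by apply: big1 => k /negbTE ki; rewrite /G ki F1.
rewrite -bigA_distr_bigA (bigD1 i) //= rest mulr1 /G eqxx.
under eq_bigr do rewrite mulrC.
exact: sum_point_dist.
Qed.

End ProductDistribution.

Section DeterministicChannels.
Variables (R : realType) (m : nat).
Hypothesis hm : (2 <= m)%N.

Local Notation maps := {ffun 'I_m -> 'I_2}.

Let i0 : 'I_m := Ordinal (ltnW hm).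
Let i1 : 'I_m := Ordinal hm.

Definition cst (y : 'I_2) : maps := [ffun=> y].

Lemma detchE (D : maps) x y : detch R D x y = (D x == y)%:R.
Proof. by rewrite /detch; case: eqP. Qed.

Lemma detch_channel (D : maps) : is_channel (detch R D).
Proof.
split=> [x y|x]; first by rewrite detchE ler0n.
rewrite sum_I2 !detchE; case: (I2_cases (D x)) => ->.
  by rewrite eqxx y0_neq_y1 addr0.
by rewrite eqxx y1_neq_y0 add0r.
Qed.

Lemma neq_cst_hit (D : maps) y : D != cst (other y) -> exists x, D x = y.
Proof.
case/boolP: [exists x, D x == y] => [/existsP [x /eqP]|/existsPn nx]; first by exists x.
case/negP; apply/eqP/ffunP => x; rewrite ffunE.
by move: (nx x); case: (I2_cases y) => ->; case: (I2_cases (D x)) => ->.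
Qed.

Lemma detrank_cst y : detrank R (cst y) = 1%N.
Proof.
have e : \matrix_(i < m, j < 2) detch R (cst y) i j =
    (const_mx 1 : 'cV[R]_m) *m \row_j (y == j)%:R.
  by apply/matrixP => i j; rewrite !mxE big_ord1 !mxE mul1r detchE ffunE.
apply/eqP; rewrite eqn_leq /detrank e (leq_trans (mxrankM_maxr _ _)) ?rank_leq_row //=.
rewrite lt0n mxrank_eq0 -e; apply/eqP => /matrixP /(_ i0 y).
by rewrite !mxE detchE ffunE eqxx => /eqP; rewrite oner_eq0.
Qed.

Lemma detrank_ge2 (D : maps) : D != cst y0 -> D != cst y1 -> (2 <= detrank R D)%N.
Proof.
(* Both rows of the identity matrix occur among the rows of the matrix of D. *)
move=> D0 D1; have [[xa Da] [xb Db]] := (neq_cst_hit (y := y0) D1, neq_cst_hit (y := y1) D0).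
rewrite -{1}(mxrank1 R 2) /detrank; apply: mxrankS; apply/row_subP => k.
have -> : row k (1%:M : 'M[R]_2) =
    row (if k == y0 then xa else xb) (\matrix_(i, j) detch R D i j).
  apply/rowP => j; rewrite !mxE detchE.
  by case: (I2_cases k) => ->; rewrite /= ?Da ?Db; case: (I2_cases j) => ->.
exact: row_sub.
Qed.

Lemma detrank_eq1 (D : maps) : (detrank R D == 1%N) = (D == cst y0) || (D == cst y1).
Proof.
have [->|D0] := eqVneq D (cst y0); first by rewrite detrank_cst.
have [->|D1] := eqVneq D (cst y1); first by rewrite detrank_cst.
by have := detrank_ge2 D0 D1; case: (detrank R D) => [|[|]].
Qed.

Lemma cst_y0y1 : (cst y0 == cst y1) = false.
Proof. by apply/negbTE/eqP => /ffunP /(_ i0); rewrite !ffunE. Qed.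

Lemma sum_detrank1 (lam : maps -> R) :
  \sum_(D | detrank R D == 1%N) lam D = lam (cst y0) + lam (cst y1).
Proof.
rewrite (eq_bigl _ _ detrank_eq1) (bigD1 (cst y0)) ?eqxx //= (bigD1 (cst y1)) /=.
  by rewrite big1 ?addr0 // => D /andP [/andP [/orP [] -> //]].
by rewrite eqxx orbT eq_sym cst_y0y1.
Qed.

Lemma detch_at_channel (u : {ffun maps -> 'I_m}) : is_channel (fun D => detch R D (u D)).
Proof. by apply/channelP => D; apply: (proj1 (channelP _) (detch_channel D)). Qed.

Lemma Vlam_channel (lam : maps -> R) : is_dist lam -> is_channel (Vlam lam).
Proof. by move=> hlam; apply/channelP => u; apply: outdist_dist hlam (detch_at_channel u). Qed.

Lemma Vlam_ge_cst (lam : maps -> R) u y : is_dist lam -> lam (cst y) <= Vlam lam u y.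
Proof.
move=> hlam; have := outdist_ge hlam (detch_at_channel u) (cst y) y.
by rewrite detchE ffunE eqxx mulr1.
Qed.

Lemma Vlam_y0_bounds (lam : maps -> R) u : is_dist lam ->
  lam (cst y0) <= Vlam lam u y0 <= 1 - lam (cst y1).
Proof.
move=> hlam; have := Vlam_ge_cst u y1 hlam.
rewrite (channel2_rowE u y1 (Vlam_channel hlam)) row2_y1 => h.
by rewrite Vlam_ge_cst //=; lra.
Qed.

Definition code (y : 'I_2) : {ffun maps -> 'I_m} :=
  [ffun D : maps => odflt i0 [pick x | D x == y]].

Lemma detch_code (D : maps) y : detch R D (code y D) y = (D != cst (other y))%:R.
Proof.
have [->|hD] := eqVneq D (cst (other y)).
  by rewrite detchE !ffunE; case: (I2_cases y) => ->.
rewrite detchE /code ffunE; case: pickP => [x /eqP -> | nx]; first by rewrite eqxx.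
by have [x Dx] := neq_cst_hit hD; move: (nx x); rewrite Dx eqxx.
Qed.

Lemma Vlam_code (lam : maps -> R) y : is_dist lam -> Vlam lam (code y) y = 1 - lam (cst (other y)).
Proof.
case=> _ lam1; rewrite -lam1 -(sum_point_dist (cst (other y)) lam) -sumrB.
apply: eq_bigr => D _; rewrite detch_code /point_dist.
by case: eqP => _; rewrite ?mulr0 ?mulr1 ?mul0r ?mul1r ?subr0 ?subrr.
Qed.

Lemma chan2_cst_channel (lam : maps -> R) : is_dist lam ->
  is_channel (chan2 (1 - lam (cst y1)) (lam (cst y0))).
Proof.
move=> hlam; have /andP [lo hi] := Vlam_y0_bounds (code y0) hlam.
have [lam_ge0 _] := hlam; have := lam_ge0 (cst y0); have := lam_ge0 (cst y1).
by move=> ge0 ge1; apply: chan2_channel; apply/andP; split; lra.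
Qed.

Lemma C10E (lam : maps -> R) : is_dist lam ->
  C10 lam = capacity (chan2 (1 - lam (cst y1)) (lam (cst y0))).
Proof.
move=> hlam; have hV := Vlam_channel hlam.
have hB := chan2_cst_channel hlam.
apply: le_anti; apply/andP; split.
  apply: (capacity_rows_between (code y0) (x1 := y0) (x2 := y1)) => // u.
  exact: Vlam_y0_bounds.
apply: (capacity_subchannel y0 (f := fun i => code i)) => // i b.
rewrite (channel2_rowE (code i) b hV); case: (I2_cases i) => ->.
  by rewrite Vlam_code // other_y0.
have := channel2_rowE (code y1) y1 hV; rewrite row2_y1 Vlam_code // other_y1 => h.
by rewrite chan2_y1; congr row2; lra.
Qed.

Lemma cst_mass_le1 (lam : maps -> R) : is_dist lam -> lam (cst y0) + lam (cst y1) <= 1.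
Proof. by move=> hlam; have /andP [lo hi] := Vlam_y0_bounds (code y0) hlam; lra. Qed.

Lemma C10_le_zch (lam : maps -> R) : is_dist lam ->
  C10 lam <= capacity (zch (lam (cst y0) + lam (cst y1))).
Proof.
move=> hlam; have [lam_ge0 _] := hlam; have le1 := cst_mass_le1 hlam.
have hbe : 0 <= lam (cst y0) <= 1 - lam (cst y1) by rewrite lam_ge0 /=; lra.
have hal : 1 - lam (cst y1) <= 1 by have := lam_ge0 (cst y1); lra.
rewrite C10E //; apply: le_trans (capacity_chan2_le_zch hbe hal) _.
by have -> : 1 - (1 - lam (cst y1)) + lam (cst y0) = lam (cst y0) + lam (cst y1) by ring.
Qed.

Lemma C10_zch (lam : maps -> R) : is_dist lam -> lam (cst y0) = 0 \/ lam (cst y1) = 0 ->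
  C10 lam = capacity (zch (lam (cst y0) + lam (cst y1))).
Proof.
move=> hlam; have [lam_ge0 _] := hlam; have := cst_mass_le1 hlam => le1.
case=> l0; rewrite C10E // l0 ?add0r ?addr0 ?subr0 //.
rewrite -(capacity_chan2_sym (al := 1)) ?subrr ?ler01 ?lexx ?lam_ge0 //=.
by move: le1; rewrite l0 add0r.
Qed.

Definition split_map : maps := [ffun x => if x == i0 then y1 else y0].
Definition split_map' : maps := [ffun x => other (split_map x)].

Lemma neq_cst (D : maps) x y : D x != y -> (D == cst y) = false.
Proof. by move=> Dx; apply/negbTE; apply: contra Dx => /eqP ->; rewrite ffunE. Qed.

Lemma detch_split x y : detch R split_map x y + detch R split_map' x y =
  detch R (cst y0) x y + detch R (cst y1) x y.
Proof.
rewrite !detchE [split_map' _]ffunE ![cst _ _]ffunE.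
case: (I2_cases (split_map x)) => ->; case: (I2_cases y) => ->;
  by rewrite ?other_y0 ?other_y1 ?eqxx ?y0_neq_y1 ?y1_neq_y0 ?addr0 ?add0r.
Qed.

Lemma split_maps_neq_cst :
  [/\ (split_map == cst y0) = false, (split_map == cst y1) = false,
      (split_map' == cst y0) = false & (split_map' == cst y1) = false].
Proof.
have i10 : i1 != i0 by [].
split; [apply: (neq_cst (x := i0)) | apply: (neq_cst (x := i1))
       | apply: (neq_cst (x := i1)) | apply: (neq_cst (x := i0))].
all: by rewrite !ffunE ?eqxx ?(negbTE i10).
Qed.

Lemma Lambda_drop_const (W : 'I_m -> 'I_2 -> R) (lam : maps -> R) : Lambda W lam ->
  exists2 lam', Lambda W lam' & (lam' (cst y0) = 0 \/ lam' (cst y1) = 0) /\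
    lam' (cst y0) + lam' (cst y1) <= lam (cst y0) + lam (cst y1).
Proof.
(* The constant pair and the complementary pair split_map, split_map' induce the same
   channel (detch_split), so mass min(l0, l1) can be moved from the former to the latter. *)
move=> [[lam_ge0 lam1] hW].
pose eps := Num.min (lam (cst y0)) (lam (cst y1)).
pose lam' D := lam D + eps * (point_dist split_map D + point_dist split_map' D
  - point_dist (cst y0) D - point_dist (cst y1) D).
have lam'E (f : maps -> R) : \sum_D lam' D * f D = \sum_D lam D * f D +
    eps * (f split_map + f split_map' - f (cst y0) - f (cst y1)).
  transitivity (\sum_D lam D * f D + eps * \sum_D (point_dist split_map D * f D +
      point_dist split_map' D * f D - point_dist (cst y0) D * f D - point_dist (cst y1) D * f D)).
    by rewrite mulr_sumr -big_split /=; apply: eq_bigr => D _; rewrite /lam'; ring.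
  by rewrite !sumrB big_split /= !sum_point_dist.
have [E0 E1 E'0 E'1] := split_maps_neq_cst.
have lam'0 : lam' (cst y0) = lam (cst y0) - eps.
  by rewrite /lam' /point_dist eqxx cst_y0y1 !(eq_sym (cst y0)) E0 E'0 /=; ring.
have lam'1 : lam' (cst y1) = lam (cst y1) - eps.
  by rewrite /lam' /point_dist eqxx (eq_sym _ (cst y0)) cst_y0y1 !(eq_sym (cst y1)) E1 E'1 /=; ring.
have eps0 : 0 <= eps by rewrite le_min !lam_ge0.
exists lam'; last split.
- split; first split.
  + move=> D; have [->|D0] := eqVneq D (cst y0); first by rewrite lam'0 subr_ge0 ge_min lexx.
    have [->|D1] := eqVneq D (cst y1); first by rewrite lam'1 subr_ge0 ge_min lexx orbT.
    rewrite /lam' /point_dist (negbTE D0) (negbTE D1) !subr0.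
    by rewrite addr_ge0 ?mulr_ge0 ?addr_ge0 ?ler0n.
  + transitivity (\sum_D lam' D * 1); first by under [RHS]eq_bigr do rewrite mulr1.
    by rewrite lam'E; under eq_bigr do rewrite mulr1; rewrite lam1; ring.
  + by move=> x y; rewrite lam'E -hW detch_split; ring.
- by rewrite lam'0 lam'1 /eps; case: leP => _; [left | right]; rewrite subrr.
- by rewrite lam'0 lam'1; lra.
Qed.

Lemma Lambda_of_bounds (W : 'I_m -> 'I_2 -> R) (a b : R) : is_channel W ->
  0 <= a -> b <= 1 -> (forall x, a <= W x y1 <= b) ->
  exists2 lam, Lambda W lam & 1 - b <= lam (cst y0) /\ a <= lam (cst y1).
Proof.
move=> hW a0 b1 hab; have ab : a <= b by have /andP [lo hi] := hab i0; apply: le_trans hi.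
pose th x := bary a b (W x y1).
have th_spec x : 0 <= th x <= 1 /\ W x y1 = th x * b + (1 - th x) * a by apply: bary_spec.
have hF : is_channel (fun x => row2 (1 - th x)).
  by apply/channelP => x; apply: row2_dist; have [/andP [? ?] _] := th_spec x; lra.
(* Under [nu] the values D x are independent, with D x = y1 with probability th x. *)
pose nu := prod_dist (fun x => row2 (1 - th x)); have [nu_ge0 nu1] := prod_dist_dist hF.
pose lam D := a * point_dist (cst y1) D + (1 - b) * point_dist (cst y0) D + (b - a) * nu D.
have lamE (f : maps -> R) : \sum_D lam D * f D =
    a * f (cst y1) + (1 - b) * f (cst y0) + (b - a) * \sum_D nu D * f D.
  rewrite -!sum_point_dist !mulr_sumr -!big_split /=.
  by apply: eq_bigr => D _; rewrite /lam; ring.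
exists lam; last split.
- split; first split.
  + by move=> D; rewrite /lam !addr_ge0 ?mulr_ge0 ?ler0n ?subr_ge0.
  + transitivity (\sum_D lam D * 1); first by under [RHS]eq_bigr do rewrite mulr1.
    by rewrite lamE; under eq_bigr do rewrite mulr1; rewrite nu1; ring.
  + move=> x y; rewrite lamE; under eq_bigr do rewrite detchE.
    rewrite prod_dist_marginal // !detchE !ffunE (channel2_rowE x y hW).
    have [_ thx] := th_spec x; have := channel2_rowE x y1 hW; rewrite row2_y1 => Wx.
    case: (I2_cases y) => ->; rewrite ?eqxx ?y0_neq_y1 ?y1_neq_y0 /= ?row2_y0 ?row2_y1; lra.
- have : 0 <= (b - a) * nu (cst y0) by rewrite mulr_ge0 ?subr_ge0.
  by rewrite /lam /point_dist eqxx cst_y0y1 /=; lra.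
- have : 0 <= (b - a) * nu (cst y1) by rewrite mulr_ge0 ?subr_ge0.
  by rewrite /lam /point_dist (eqxx (cst y1)) (eq_sym (cst y1)) cst_y0y1 /=; lra.
Qed.

Lemma Lambda_extremal (W : 'I_m -> 'I_2 -> R) : is_channel W ->
  exists lam x1 x2, [/\ Lambda W lam, W x2 y0 <= lam (cst y0) & W x1 y1 <= lam (cst y1)].
Proof.
move=> hW; have [W_ge0 _] := hW.
have [x1 _ hmin] := @arg_minP _ _ _ i0 predT (fun x => W x y1) isT.
have [x2 _ hmax] := @arg_maxP _ _ _ i0 predT (fun x => W x y1) isT.
have hab x : W x1 y1 <= W x y1 <= W x2 y1 by rewrite (hmin x isT); apply: (hmax x isT).
have b1 : W x2 y1 <= 1 by rewrite (channel2_rowE x2 y1 hW) gerBl.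
have [lam hl [h0 h1]] := Lambda_of_bounds hW (W_ge0 x1 y1) b1 hab.
exists lam, x1, x2; split => //.
by rewrite (channel2_rowE x2 y1 hW) opprB subrKC in h0.
Qed.

Section FixedChannel.
Variable W : 'I_m -> 'I_2 -> R.
Hypothesis hW : is_channel W.

Lemma capacity_le_C10 (lam : maps -> R) : Lambda W lam -> capacity W <= C10 lam.
Proof.
move=> [hlam hWlam]; apply: (capacity_subchannel i0 (f := fun x => [ffun=> x])).
  exact: Vlam_channel.
by move=> x b; rewrite hWlam; apply: eq_bigr => D _; rewrite ffunE.
Qed.

Lemma C10_le_capacity (lam : maps -> R) x1 x2 : Lambda W lam ->
  W x2 y0 <= lam (cst y0) -> W x1 y1 <= lam (cst y1) -> C10 lam <= capacity W.
Proof.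
move=> [hlam _] h0 h1; rewrite C10E //.
have le1 := cst_mass_le1 hlam; have := channel2_rowE x1 y1 hW; rewrite row2_y1 => W1.
apply: (capacity_rows_between y0 (x1 := x1) (x2 := x2)) => //; first exact: chan2_cst_channel.
by move=> u; case: (I2_cases u) => ->; rewrite !chan2E; apply/andP; split; lra.
Qed.

Lemma lowC10E : lowC10 W = capacity W.
Proof.
have [lam [x1 [x2 [hl h0 h1]]]] := Lambda_extremal hW.
have lb : lbound [set x | exists lam, Lambda W lam /\ x = C10 lam] (capacity W).
  by move=> _ [l [hl' ->]]; apply: capacity_le_C10.
apply: le_anti; apply/andP; split; last by apply: lb_le_inf => //; exists (C10 lam), lam.
apply: le_trans (C10_le_capacity hl h0 h1).
by apply: ge_inf; [exists (capacity W) | exists lam].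
Qed.

Lemma lowP1E : lowP1 W =
  inf [set s | exists lam, Lambda W lam /\ s = lam (cst y0) + lam (cst y1)].
Proof.
rewrite /lowP1; congr inf; apply: funext => s; apply: propext.
by split=> -[lam [hl ->]]; exists lam; rewrite sum_detrank1.
Qed.

Lemma upC10E : upC10 W = capacity (zch (lowP1 W)).
Proof.
have [lam0 [x1 [x2 [hl0 _ _]]]] := Lambda_extremal hW.
rewrite lowP1E; set S := [set s | _]; set P := inf S.
have S_inf : has_inf S.
  split; first by exists (lam0 (cst y0) + lam0 (cst y1)), lam0.
  by exists 0 => _ [lam [[[lam_ge0 _] _] ->]]; rewrite addr_ge0.
have P_le lam : Lambda W lam -> P <= lam (cst y0) + lam (cst y1).
  by move=> hl; apply: ge_inf (proj2 S_inf) _ _; exists lam.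
have P0 : 0 <= P.
  by apply: lb_le_inf (proj1 S_inf) _ => _ [lam [[[lam_ge0 _] _] ->]]; rewrite addr_ge0.
set E := [set x | exists lam, Lambda W lam /\ x = C10 lam].
have E_ub : ubound E (capacity (zch P)).
  move=> _ [lam [hl ->]]; apply: le_trans (C10_le_zch (proj1 hl)) _.
  by apply: capacity_zch_antitone; rewrite ?P0 ?P_le ?(cst_mass_le1 (proj1 hl)).
apply: le_anti; apply/andP; split; first by apply: ge_sup => //; exists (C10 lam0), lam0.
rewrite leNgt; apply/negP => lt_sup; have [d d0 hd] := capacity_zch_rcont P0 lt_sup.
have [_ [lam [hl ->]] lt_d] := inf_adherent d0 S_inf.
have [lam' hl' [h0 le_s]] := Lambda_drop_const hl; have [hlam' _] := hl'.
have sup_ge : C10 lam' <= sup E by apply: ub_le_sup; [exists (capacity (zch P)) | exists lam'].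
suff : sup E < C10 lam' by rewrite ltNge sup_ge.
rewrite C10_zch //; apply: hd; last exact: le_lt_trans le_s lt_d.
by rewrite P_le // cst_mass_le1.
Qed.

End FixedChannel.

End DeterministicChannels.

Theorem theorem3 (R : realType) (m : nat) (hm : (2 <= m)%N)
  (W : 'M[R]_(m, 2)) (hW : is_channel (fun x y => W x y)) :
  lowC10 (fun x y => W x y) = capacity (fun x y => W x y) /\
  upC10 (fun x y => W x y) =
    capacity (fun i j => zchan (lowP1 (fun x y => W x y)) i j).
Proof. by split; [exact: lowC10E | rewrite zchanE; exact: upC10E]. Qed.
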